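(* Let $d>0$, let $\ell$ be a certified lower bound for $A^\top x\le u$ with certificate matrix $\Lambda$, and suppose $f(d,\ell)=1$. Let $i\in\arg\max_{h\in\{1,\dots,m\}}(a_h^\top y(d,\ell)-u_h)$, and define $\hat\lambda_i:=\gamma_i(d,\ell)Dt(d,\ell)-DA^\top B(d)^{-1}a_i$ and $\tilde\lambda_i:=\Lambda\hat\lambda_i^-+\hat\lambda_i^+$. If $\gamma_i(d,\ell)<\tau(A,u)$, then $\bar\lambda_i:=\tilde\lambda_i+e_i$ satisfies $A\bar\lambda_i=0$, $\bar\lambda_i\ge0$, $u^\top\bar\lambda_i<0$.
   Context: Standing assumption: $A=[a_1|\cdots|a_m]\in\mathbb{R}^{n\times m}$ has columns of unit Euclidean norm and $\{A\lambda:\lambda\ge0\}=\mathbb{R}^n$; $u\in\mathbb{R}^m$. $D=\mathrm{diag}(d)$; $r(\ell)=\tfrac12(u+\ell)$, $v(\ell)=\tfrac12(u-\ell)$, $B(d)=ADA^\top$, $y(d,\ell)=B(d)^{-1}ADr(\ell)$, $t(d,\ell)=A^\top y(d,\ell)-r(\ell)$, $f(d,\ell)=v(\ell)^\top Dv(\ell)-t(d,\ell)^\top Dt(d,\ell)$, $\gamma_i(d,\ell)=\sqrt{f(d,\ell)a_i^\top B(d)^{-1}a_i}$ when $f(d,\ell)>0$. $\ell$ is a certified lower bound with certificate matrix $\Lambda$ if $A\Lambda=-A$, $\Lambda\ge0$, $-\Lambda^\top u\ge\ell$. $\tau(A,u):=|z^*|$ with $z^*:=\max_{x}\min_{i}(u_i-a_i^\top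 x)$. $w^\pm$ are positive/negative parts. *)

From HB Require Import structures.
From mathcomp Require Import all_boot all_order all_algebra.
Set Implicit Arguments. Unset Strict Implicit. Unset Printing Implicit Defensive.
Import Order.TTheory GRing.Theory Num.Theory.
Local Open Scope ring_scope.

Section Defs.
Variables (R : rcfType) (n m : nat).
Implicit Types (A : 'M[R]_(n, m)) (u d l : 'cV[R]_m).

Definition acol A (i : 'I_m) : 'cV[R]_n := col i A.

Definition unit_columns A := forall i : 'I_m, \sum_(k < n) (A k i) ^+ 2 = 1.
Definition positively_spanning A :=
  forall x : 'cV[R]_n, exists lam : 'cV[R]_m,
    (forall i, 0 <= lam i 0) /\ A *m lam = x.

Definition Dmat d : 'M[R]_m := diag_mx d^T.
Definition rvec u l : 'cV[R]_m := 2^-1 *: (u + l).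
Definition vvec u l : 'cV[R]_m := 2^-1 *: (u - l).
Definition Bmat A d : 'M[R]_n := A *m Dmat d *m A^T.
Definition yvec A u d l : 'cV[R]_n := invmx (Bmat A d) *m A *m Dmat d *m rvec u l.
Definition tvec A u d l : 'cV[R]_m := A^T *m yvec A u d l - rvec u l.
Definition fval A u d l : R :=
  ((vvec u l)^T *m Dmat d *m vvec u l) 0 0
  - ((tvec A u d l)^T *m Dmat d *m tvec A u d l) 0 0.
(* gamma_i; only meaningful when fval > 0 *)
Definition gammai A u d l (i : 'I_m) : R :=
  Num.sqrt (fval A u d l * ((acol A i)^T *m invmx (Bmat A d) *m acol A i) 0 0).

Definition certified_lb A u l (Lam : 'M[R]_m) :=
  [/\ A *m Lam = - A, forall i j, 0 <= Lam i j &
      forall i, l i 0 <= (- (Lam^T *m u)) i 0].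

Definition pospart (w : 'cV[R]_m) : 'cV[R]_m := \col_i Num.max (w i 0) 0.
Definition negpart (w : 'cV[R]_m) : 'cV[R]_m := \col_i Num.max (- w i 0) 0.

Definition is_min_slack A u (x : 'cV[R]_n) (z : R) :=
  (exists i, z = u i 0 - (A^T *m x) i 0) /\
  (forall i, z <= u i 0 - (A^T *m x) i 0).
Definition is_zstar A u (z : R) :=
  (exists x, is_min_slack A u x z) /\
  (forall x w, is_min_slack A u x w -> w <= z).

End Defs.

(* If z* >= 0, an optimal x has slacks u_j - a_j^T x >= z*; since A Lam = -A with
   unit columns forces every column sum of Lam to be >= 1, the certified bound gives
   l_j <= a_j^T x - z* as well, and as t is the D-least-squares residual,
   1 = f >= sum_j d_j (u_j - a_j^T x)(a_j^T x - l_j) >= z*^2 sum_j d_j.  On the other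
   hand gamma_i^2 = a_i^T B^-1 a_i and Cauchy-Schwarz give gamma_i^2 sum_j d_j >= 1,
   so gamma_i >= z*: only z* < 0 is compatible with the hypothesis.
   Writing c = A^T B^-1 a_i, one has lhat = D (gamma_i t - c) and A lhat = -a_i; the
   certificate Lam turns lhat into the nonnegative ltil with the same image, so
   A lbar = 0.  Bounding u^T ltil entrywise through l <= -Lam^T u and AM-GM gives
   u^T ltil <= gamma_i - a_i^T y, and u_i - a_i^T y <= z* because i maximizes the
   residual at y, hence u^T lbar <= gamma_i + z* < 0. *)

From HB Require Import structures.
From mathcomp Require Import all_boot all_order all_algebra.
From mathcomp Require Import ring lra.
Set Implicit Arguments. Unset Strict Implicit.
Import Order.TTheory GRing.Theory Num.Theory.
Local Open Scope ring_scope.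

Section Dot.
Variables (R : realFieldType) (k : nat).
Implicit Types (p q s : 'cV[R]_k).

Definition dot p q : R := (p^T *m q) 0 0.

Lemma dotE p q : dot p q = \sum_j p j 0 * q j 0.
Proof. by rewrite /dot mxE; apply: eq_bigr => j _; rewrite mxE. Qed.

Lemma dotC p q : dot p q = dot q p.
Proof. by rewrite !dotE; apply: eq_bigr => j _; rewrite mulrC. Qed.

Lemma dot0r p : dot p 0 = 0.
Proof. by rewrite /dot mulmx0 mxE. Qed.

Lemma dotDr p q s : dot p (q + s) = dot p q + dot p s.
Proof. by rewrite /dot mulmxDr mxE. Qed.

Lemma dotNr p q : dot p (- q) = - dot p q.
Proof. by rewrite /dot mulmxN mxE. Qed.

Lemma dotDl p q s : dot (p + q) s = dot p s + dot q s.
Proof. by rewrite dotC dotDr !(dotC s). Qed.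

Lemma dotNl p q : dot (- p) q = - dot p q.
Proof. by rewrite dotC dotNr dotC. Qed.

Lemma dotBl p q s : dot (p - q) s = dot p s - dot q s.
Proof. by rewrite dotDl dotNl. Qed.

Lemma dot_delta p i : dot p (delta_mx i 0) = p i 0.
Proof. by rewrite /dot -colE !mxE. Qed.

Lemma dot_self_ge0 p : 0 <= dot p p.
Proof. by rewrite dotE; apply: sumr_ge0 => j _; rewrite -expr2 sqr_ge0. Qed.

Lemma normr_dot_le1 p q : dot p p = 1 -> dot q q = 1 -> `|dot p q| <= 1.
Proof.
move=> pp1 qq1; have := dot_self_ge0 (p + q); have := dot_self_ge0 (p - q).
rewrite !(dotDl, dotDr, dotNl, dotNr) opprK pp1 qq1 (dotC q) ler_norml; lra.
Qed.

End Dot.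

Lemma dot_mulmxl (R : realFieldType) k k' (M : 'M[R]_(k', k)) p (q : 'cV[R]_k') :
  dot (M *m p) q = dot p (M^T *m q).
Proof. by rewrite /dot trmx_mul mulmxA. Qed.

Lemma dot_mulmxr (R : realFieldType) k k' (M : 'M[R]_(k, k')) p (q : 'cV[R]_k') :
  dot p (M *m q) = dot (M^T *m p) q.
Proof. by rewrite dotC dot_mulmxl dotC. Qed.

Section Diagonal.
Variables (R : rcfType) (k : nat) (d : 'cV[R]_k).
Implicit Types (p q : 'cV[R]_k).

Lemma Dmat_mulE p j : (Dmat d *m p) j 0 = d j 0 * p j 0.
Proof. by rewrite /Dmat mul_diag_mx !mxE. Qed.

Lemma Dmat_tr : (Dmat d)^T = Dmat d.
Proof. exact: tr_diag_mx. Qed.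

Lemma dot_DmatE p q : dot p (Dmat d *m q) = \sum_j d j 0 * (p j 0 * q j 0).
Proof. by rewrite dotE; apply: eq_bigr => j _; rewrite Dmat_mulE mulrCA. Qed.

Lemma dot_Dmat_sym p q : dot p (Dmat d *m q) = dot q (Dmat d *m p).
Proof. by rewrite dotC dot_mulmxl Dmat_tr. Qed.

Lemma dot_Dmat_ge0 p : (forall j, 0 <= d j 0) -> 0 <= dot p (Dmat d *m p).
Proof.
move=> d_ge0; rewrite dot_DmatE; apply: sumr_ge0 => j _.
by rewrite mulr_ge0 // -expr2 sqr_ge0.
Qed.

Lemma dot_Dmat_eq0 p : (forall j, 0 < d j 0) -> dot p (Dmat d *m p) = 0 -> p = 0.
Proof.
move=> d_gt0; rewrite dot_DmatE => /eqP; rewrite psumr_eq0 => [/allP p0|j _]; last first.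
  by apply: mulr_ge0; [exact: ltW | rewrite -expr2 sqr_ge0].
apply/matrixP => j j0; rewrite (ord1 j0) mxE.
have /implyP/(_ isT) := p0 j (mem_index_enum j).
by rewrite mulf_eq0 (gt_eqF (d_gt0 j)) mulf_eq0 orbb => /eqP.
Qed.

End Diagonal.

Lemma dot_self_eq0 (R : rcfType) k (p : 'cV[R]_k) : dot p p = 0 -> p = 0.
Proof.
move=> pp0; apply: (@dot_Dmat_eq0 _ _ (const_mx 1)) => [j|]; first by rewrite mxE ltr01.
by rewrite /Dmat trmx_const diag_const_mx mul1mx.
Qed.

Lemma dot_acol (R : rcfType) n m (A : 'M[R]_(n, m)) j :
  unit_columns A -> dot (acol A j) (acol A j) = 1.
Proof. by move=> hA; rewrite dotE -(hA j); apply: eq_bigr => k _; rewrite !mxE expr2. Qed.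

Lemma trmx_mulmxE (R : rcfType) n m (A : 'M[R]_(n, m)) (x : 'cV[R]_n) k :
  (A^T *m x) k 0 = dot (acol A k) x.
Proof. by rewrite dotE mxE; apply: eq_bigr => q _; rewrite !mxE. Qed.

Section Gram.
Variables (R : rcfType) (n m : nat) (A : 'M[R]_(n, m)) (d : 'cV[R]_m).

Lemma Bmat_tr : (Bmat A d)^T = Bmat A d.
Proof. by rewrite /Bmat !trmx_mul trmxK Dmat_tr mulmxA. Qed.

Lemma dot_Bmat x : dot x (Bmat A d *m x) = dot (A^T *m x) (Dmat d *m (A^T *m x)).
Proof. by rewrite /Bmat -!mulmxA dot_mulmxr. Qed.

Hypotheses (A_span : positively_spanning A) (d_gt0 : forall j, 0 < d j 0).

Lemma Bmat_inj (x : 'cV[R]_n) : Bmat A d *m x = 0 -> x = 0.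
Proof.
move=> Bx0; have ATx0 : A^T *m x = 0.
  by apply: (dot_Dmat_eq0 d_gt0); rewrite -dot_Bmat Bx0 dot0r.
have [lam [_ ex]] := A_span x.
by apply: dot_self_eq0; rewrite -{1}ex dot_mulmxl ATx0 dot0r.
Qed.

Lemma Bmat_unit : Bmat A d \in unitmx.
Proof.
rewrite -row_free_unit -kermx_eq0; apply/rowV0P => x /sub_kermxP xB0.
apply: trmx_inj; rewrite trmx0; apply: Bmat_inj.
by rewrite -Bmat_tr -trmx_mul xB0 trmx0.
Qed.

End Gram.

Section PosNegParts.
Variables (R : rcfType) (m : nat).
Implicit Types (w : 'cV[R]_m).

Lemma pospart_ge0 w j : 0 <= pospart w j 0.
Proof. by rewrite mxE le_max lexx orbT. Qed.

Lemma negpart_ge0 w j : 0 <= negpart w j 0.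
Proof. by rewrite mxE le_max lexx orbT. Qed.

Lemma pospart_sub_negpart w : pospart w - negpart w = w.
Proof.
apply/matrixP => j k; rewrite (ord1 k) !mxE /Order.max.
by case: ltrP => h1; case: ltrP => h2; lra.
Qed.

End PosNegParts.

Section Scalar.
Variable R : realFieldType.

Lemma amgm_weighted (K a b : R) : 0 < K -> 2 * (a * b) <= K * a ^+ 2 + b ^+ 2 / K.
Proof.
move=> K_gt0; have : 0 <= (K * a - b) ^+ 2 / K by rewrite divr_ge0 ?sqr_ge0 ?ltW.
have -> : (K * a - b) ^+ 2 / K = K * a ^+ 2 - 2 * (a * b) + b ^+ 2 / K.
  by field; rewrite gt_eqF.
lra.
Qed.

Lemma posneg_combination_le (K h lo hi : R) : 0 < K ->
  - lo * Num.max (- h) 0 + hi * Num.max h 0 <=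
  2^-1 * (hi + lo) * h + 2^-1 * (K * (2^-1 * (hi - lo)) ^+ 2 + h ^+ 2 / K).
Proof.
move=> K_gt0; have := amgm_weighted (2^-1 * (hi - lo)) h K_gt0.
have := amgm_weighted (2^-1 * (hi - lo)) (- h) K_gt0; rewrite sqrrN.
have [h0 | /ltW h0] := lerP 0 h.
  by rewrite max_r ?oppr_le0 //; lra.
by rewrite max_l ?oppr_ge0 //; lra.
Qed.

End Scalar.

Section CertifiedLowerBound.
Variables (R : rcfType) (n m : nat) (A : 'M[R]_(n, m)) (u l : 'cV[R]_m).
Variable Lam : 'M[R]_m.
Hypothesis cert : certified_lb A u l Lam.

Lemma mulmx_certificate_combination w :
  A *m (Lam *m negpart w + pospart w) = A *m w.
Proof.
have [ALam _ _] := cert.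
by rewrite mulmxDr mulmxA ALam mulNmx addrC -mulmxN -mulmxDr pospart_sub_negpart.
Qed.

Lemma certificate_combination_ge0 w j : 0 <= (Lam *m negpart w + pospart w) j 0.
Proof.
have [_ Lam_ge0 _] := cert; rewrite mxE addr_ge0 ?pospart_ge0 // mxE.
by apply: sumr_ge0 => k _; rewrite mulr_ge0 ?negpart_ge0.
Qed.

Lemma certified_lb_dot_le w : dot u (Lam *m negpart w + pospart w) <=
  \sum_j (- l j 0 * negpart w j 0 + u j 0 * pospart w j 0).
Proof.
have [_ _ lb] := cert.
rewrite dotDr dot_mulmxr !dotE -big_split /=; apply: ler_sum => j _.
rewrite lerD2r ler_wpM2r ?negpart_ge0 //.
by move: (lb j); rewrite mxE lerNr.
Qed.

Hypothesis A_unit : unit_columns A.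

(* a_j^T A Lam_j = -1, while every a_j^T a_k lies in [-1, 1]. *)
Lemma certificate_colsum_ge1 j : 1 <= \sum_k Lam k j.
Proof.
have [ALam Lam_ge0 _] := cert.
have : dot (col j Lam) (A^T *m acol A j) = -1.
  by rewrite -dot_mulmxl colE mulmxA ALam mulNmx -colE dotNl dot_acol.
rewrite dotE => /(congr1 -%R); rewrite opprK -sumrN => <-.
apply: ler_sum => k _; rewrite trmx_mulmxE mxE -mulrN -[X in _ <= X]mulr1.
apply: ler_wpM2l => //.
have := normr_dot_le1 (dot_acol k A_unit) (dot_acol j A_unit).
by rewrite ler_norml lerNl => /andP[].
Qed.

Lemma certified_lb_le_slack (x : 'cV[R]_n) (z : R) : 0 <= z ->
  (forall j, z <= u j 0 - (A^T *m x) j 0) -> forall j, l j 0 <= (A^T *m x) j 0 - z.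
Proof.
move=> z_ge0 slack j; have [ALam Lam_ge0 lb] := cert.
have LamT_s : Lam^T *m (A^T *m x) = - (A^T *m x).
  by rewrite mulmxA -trmx_mul ALam linearN /= mulNmx.
have : z * \sum_k Lam k j <= (Lam^T *m u) j 0 - (Lam^T *m (A^T *m x)) j 0.
  rewrite !mxE -sumrB mulr_sumr; apply: ler_sum => k _.
  by rewrite !mxE -mulrBr mulrC ler_wpM2l //; move: (slack k); rewrite mxE.
have := ler_wpM2l z_ge0 (certificate_colsum_ge1 j); have := lb j.
by rewrite LamT_s !mxE; lra.
Qed.

End CertifiedLowerBound.

Lemma Dnorm_vvec_sub (R : rcfType) m (u l d s : 'cV[R]_m) :
  dot (vvec u l) (Dmat d *m vvec u l) - dot (s - rvec u l) (Dmat d *m (s - rvec u l)) =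
  \sum_j d j 0 * ((u j 0 - s j 0) * (s j 0 - l j 0)).
Proof.
rewrite !dot_DmatE -sumrB; apply: eq_bigr => j _.
by rewrite !mxE; field.
Qed.

Lemma slack_argmax_le_zstar (R : rcfType) n m (A : 'M[R]_(n, m)) u (x : 'cV[R]_n)
  zstar (i : 'I_m) :
  is_zstar A u zstar ->
  (forall h, (A^T *m x) h 0 - u h 0 <= (A^T *m x) i 0 - u i 0) ->
  u i 0 - (A^T *m x) i 0 <= zstar.
Proof.
move=> [_ zstar_max] i_max; apply: zstar_max; split; first by exists i.
by move=> h; have := i_max h; lra.
Qed.

Section FarkasCertificate.
Variables (R : rcfType) (n m : nat) (A : 'M[R]_(n, m)) (u d l : 'cV[R]_m).
Hypotheses (A_span : positively_spanning A) (d_gt0 : forall j, 0 < d j 0).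

Local Notation D := (Dmat d).
Local Notation B := (Bmat A d).
Local Notation y := (yvec A u d l).
Local Notation t := (tvec A u d l).
Local Notation r := (rvec u l).
Local Notation v := (vvec u l).

Lemma Bmat_yvec : B *m y = A *m D *m r.
Proof.
have -> : y = invmx B *m (A *m D *m r) by rewrite /yvec !mulmxA.
by rewrite mulKVmx ?Bmat_unit.
Qed.

Lemma A_Dmat_tvec : A *m (D *m t) = 0.
Proof.
have -> : A *m (D *m t) = B *m y - A *m D *m r by rewrite /tvec !mulmxBr !mulmxA.
by rewrite Bmat_yvec subrr.
Qed.

Lemma dot_range_Dmat_tvec x : dot (A^T *m x) (D *m t) = 0.
Proof. by rewrite dot_mulmxl trmxK A_Dmat_tvec dot0r. Qed.

Lemma Dnorm_tvec_le x : dot t (D *m t) <= dot (A^T *m x - r) (D *m (A^T *m x - r)).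
Proof.
have -> : A^T *m x - r = t + A^T *m (x - y) by rewrite /tvec mulmxBr [RHS]addrC addrA subrK.
move: (dot_range_Dmat_tvec (x - y)); move: (A^T *m (x - y)) t => s p sp0.
rewrite mulmxDr !(dotDl, dotDr) (dot_Dmat_sym d p s) sp0 add0r addr0 lerDl.
by apply: dot_Dmat_ge0 => j; exact: ltW.
Qed.

Lemma fvalE : fval A u d l = dot v (D *m v) - dot t (D *m t).
Proof. by rewrite /fval /dot !mulmxA. Qed.

Lemma sqr_slack_trace_le_fval (x : 'cV[R]_n) (z : R) : 0 <= z ->
  (forall j, z <= u j 0 - (A^T *m x) j 0) -> (forall j, l j 0 <= (A^T *m x) j 0 - z) ->
  z ^+ 2 * \sum_j d j 0 <= fval A u d l.
Proof.
move=> z_ge0 slack_up slack_lo; rewrite fvalE.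
apply: le_trans (lerB (lexx _) (Dnorm_tvec_le x)).
rewrite Dnorm_vvec_sub mulr_sumr; apply: ler_sum => j _.
rewrite mulrC; apply: ler_wpM2l; first exact: ltW.
by have := slack_up j; have := slack_lo j; nra.
Qed.

Variable i : 'I_m.
Local Notation ai := (acol A i).
Local Notation w := (invmx B *m ai).
Local Notation c := (A^T *m w).

Lemma A_Dmat_c : A *m (D *m c) = ai.
Proof.
have -> : A *m (D *m c) = B *m w by rewrite !mulmxA.
by rewrite mulKVmx ?Bmat_unit.
Qed.

Lemma dot_ai_w : dot ai w = dot c (D *m c).
Proof. by rewrite -{1}A_Dmat_c dot_mulmxl dotC. Qed.

Hypothesis A_unit : unit_columns A.

Lemma dot_ai_w_gt0 : 0 < dot ai w.
Proof.
rewrite lt_def dot_ai_w dot_Dmat_ge0 ?andbT => [|j]; last exact: ltW.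
apply/eqP => /(dot_Dmat_eq0 d_gt0) c0.
move: (dot_acol i A_unit); rewrite -{1}A_Dmat_c c0 !mulmx0 dotC dot0r => /eqP.
by rewrite eq_sym oner_eq0.
Qed.

(* With beta = a_i^T w: 1 = a_i^T a_i = sum_j d_j (a_j^T a_i) c_j, and termwise
   2 beta (a_j^T a_i) c_j <= c_j^2 + beta^2, so 2 beta <= beta + beta^2 sum_j d_j. *)
Lemma dot_ai_w_trace_ge1 : 1 <= dot ai w * \sum_j d j 0.
Proof.
set beta := dot ai w; have beta_gt0 : 0 < beta := dot_ai_w_gt0.
have cross : \sum_j d j 0 * ((A^T *m ai) j 0 * c j 0) = 1.
  by rewrite -dot_DmatE dot_mulmxl trmxK A_Dmat_c dot_acol.
have : \sum_j d j 0 * (2 * beta * ((A^T *m ai) j 0 * c j 0)) <=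
       \sum_j d j 0 * (c j 0 * c j 0 + beta ^+ 2).
  apply: ler_sum => j _; apply: ler_wpM2l; first exact: ltW.
  have := normr_dot_le1 (dot_acol j A_unit) (dot_acol i A_unit).
  rewrite -trmx_mulmxE ler_norml => /andP[G_ge G_le].
  set G := (A^T *m ai) j 0 in G_ge G_le *.
  have G2 : beta ^+ 2 * G ^+ 2 <= beta ^+ 2 * 1.
    by apply: ler_wpM2l; [exact: sqr_ge0 | nra].
  have := sqr_ge0 (c j 0 - beta * G); nra.
have -> : \sum_j d j 0 * (2 * beta * ((A^T *m ai) j 0 * c j 0)) = 2 * beta.
  by rewrite -[RHS]mulr1 -cross mulr_sumr; apply: eq_bigr => j _; rewrite mulrCA.
have -> : \sum_j d j 0 * (c j 0 * c j 0 + beta ^+ 2) =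
          dot c (D *m c) + beta ^+ 2 * \sum_j d j 0.
  rewrite dot_DmatE mulr_sumr -big_split; apply: eq_bigr => j _.
  by rewrite mulrDr [beta ^+ 2 * _]mulrC.
rewrite -dot_ai_w -/beta; nra.
Qed.

Hypothesis f_eq1 : fval A u d l = 1.
Local Notation g := (gammai A u d l i).

Lemma gammai_sqr : g ^+ 2 = dot ai w.
Proof.
rewrite /gammai; have -> : (ai^T *m invmx B *m ai) 0 0 = dot ai w by rewrite /dot mulmxA.
by rewrite f_eq1 mul1r sqr_sqrtr // ltW // dot_ai_w_gt0.
Qed.

Lemma gammai_gt0 : 0 < g.
Proof. by rewrite /gammai f_eq1 mul1r sqrtr_gt0 -mulmxA dot_ai_w_gt0. Qed.

Variable Lam : 'M[R]_m.
Hypothesis cert : certified_lb A u l Lam.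

Lemma zstar_le_gammai zstar : is_zstar A u zstar -> 0 <= zstar -> zstar <= g.
Proof.
move=> [[x [_ slack]] _] z_ge0.
have S_gt0 : 0 < \sum_j d j 0.
  rewrite (bigD1 i) //=; have := d_gt0 i.
  have : 0 <= \sum_(j | j != i) d j 0 by apply: sumr_ge0 => j _; exact: ltW.
  lra.
have := sqr_slack_trace_le_fval z_ge0 slack (certified_lb_le_slack cert A_unit z_ge0 slack).
have := dot_ai_w_trace_ge1; rewrite f_eq1 -gammai_sqr => ge1 le1.
have : zstar ^+ 2 <= g ^+ 2 by rewrite -(ler_pM2r S_gt0); lra.
by rewrite ler_sqr ?nnegrE // ltW // gammai_gt0.
Qed.

Local Notation lhat := (g *: (D *m t) - D *m A^T *m invmx B *m ai).

Lemma lhatE : lhat = D *m (g *: t - c).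
Proof. by rewrite [RHS]mulmxBr scalemxAr !mulmxA. Qed.

Lemma A_lhat : A *m lhat = - ai.
Proof.
by rewrite lhatE !mulmxBr -!scalemxAr A_Dmat_tvec A_Dmat_c scaler0 sub0r.
Qed.

Lemma dot_rvec_Dmat_tvec : dot r (D *m t) = - dot t (D *m t).
Proof.
have -> : r = A^T *m y - t by rewrite /tvec opprB addrC subrK.
by rewrite dotBl dot_range_Dmat_tvec sub0r.
Qed.

Lemma dot_rvec_Dmat_c : dot r (D *m c) = (A^T *m y) i 0.
Proof.
rewrite dot_Dmat_sym dot_mulmxl trmxK mulmxA -Bmat_yvec dot_mulmxr Bmat_tr.
by rewrite mulKVmx ?Bmat_unit // trmx_mulmxE.
Qed.

Lemma dot_tvec_Dmat_c : dot t (D *m c) = 0.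
Proof. by rewrite dot_Dmat_sym dot_range_Dmat_tvec. Qed.

Lemma posneg_bound_sumE (p q : 'cV[R]_m) (k : R) : 0 < k ->
  \sum_j (2^-1 * (u j 0 + l j 0) * (D *m (k *: p - q)) j 0 +
          2^-1 * (k * d j 0 * (2^-1 * (u j 0 - l j 0)) ^+ 2 +
                  (D *m (k *: p - q)) j 0 ^+ 2 / (k * d j 0))) =
  k * dot r (D *m p) - dot r (D *m q) + 2^-1 * k * (dot v (D *m v) + dot p (D *m p))
  - dot p (D *m q) + 2^-1 / k * dot q (D *m q).
Proof.
move=> k_gt0; rewrite !dot_DmatE mulrDr !mulr_sumr -!(sumrB, big_split) /=.
apply: eq_bigr => j _; rewrite Dmat_mulE !mxE.
by field; rewrite !gt_eqF ?d_gt0.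
Qed.

(* AM-GM on each entry of lhat with weight gamma d_j; because A D t = 0 and f = 1
   the resulting sum collapses to gamma - a_i^T y. *)
Lemma dot_u_certificate_lhat_le :
  dot u (Lam *m negpart lhat + pospart lhat) <= g - (A^T *m y) i 0.
Proof.
have g_gt0 := gammai_gt0; rewrite lhatE.
apply: le_trans (certified_lb_dot_le cert _) _.
apply: le_trans (_ : _ <= \sum_j (2^-1 * (u j 0 + l j 0) * (D *m (g *: t - c)) j 0 +
    2^-1 * (g * d j 0 * (2^-1 * (u j 0 - l j 0)) ^+ 2 +
            (D *m (g *: t - c)) j 0 ^+ 2 / (g * d j 0)))) _.
  by apply: ler_sum => j _; rewrite !mxE posneg_combination_le ?mulr_gt0.
rewrite posneg_bound_sumE // dot_rvec_Dmat_tvec dot_rvec_Dmat_c dot_tvec_Dmat_c.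
rewrite -dot_ai_w -gammai_sqr.
have -> : dot v (D *m v) = 1 + dot t (D *m t) by rewrite -f_eq1 fvalE subrK.
have -> : 2^-1 / g * g ^+ 2 = 2^-1 * g by field; rewrite gt_eqF.
lra.
Qed.

End FarkasCertificate.

Unset Implicit Arguments.

Theorem proposition4 (R : rcfType) (n m : nat) (A : 'M[R]_(n, m))
  (u d l : 'cV[R]_m) (Lam : 'M[R]_m) (zstar : R) (i : 'I_m) :
  unit_columns A -> positively_spanning A ->
  (forall j, 0 < d j 0) ->
  certified_lb A u l Lam ->
  fval A u d l = 1 ->
  (forall h : 'I_m, (A^T *m yvec A u d l) h 0 - u h 0 <=
                    (A^T *m yvec A u d l) i 0 - u i 0) ->
  is_zstar A u zstar ->
  let lhat := gammai A u d l i *: (Dmat d *m tvec A u d l)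
              - Dmat d *m A^T *m invmx (Bmat A d) *m acol A i in
  let ltil := Lam *m negpart lhat + pospart lhat in
  let lbar := ltil + delta_mx i 0 in
  gammai A u d l i < `|zstar| ->
  [/\ A *m lbar = 0, forall j, 0 <= lbar j 0 & (u^T *m lbar) 0 0 < 0].
Proof.
move=> A_unit A_span d_gt0 cert f_eq1 i_max zstar_opt lhat ltil lbar g_lt.
split.
- by rewrite mulmxDr (mulmx_certificate_combination cert) (A_lhat u l A_span d_gt0) -colE addNr.
- by move=> j; rewrite mxE addr_ge0 ?(certificate_combination_ge0 cert) // mxE ler0n.
have [z_ge0 | z_lt0] := leP 0 zstar.
  have := zstar_le_gammai A_span d_gt0 i A_unit f_eq1 cert zstar_opt z_ge0.
  by rewrite ger0_norm in g_lt; lra.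
rewrite ltr0_norm // in g_lt.
have slack := slack_argmax_le_zstar zstar_opt i_max.
have bound := dot_u_certificate_lhat_le A_span d_gt0 i A_unit f_eq1 cert.
by rewrite -/(dot u lbar) /lbar /ltil /lhat dotDr dot_delta; lra.
Qed.
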